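(* Let $N+1\ge 10$ and $m=\lfloor (N+1)/10\rfloor$. Let $\rho_1,\dots,\rho_{N+1}$ be a multiset of transfer exponents to a target $\mathcal{D}$ (with common constant $C_\rho$), ordered as $\rho_{(1)}\le\dots\le\rho_{(N+1)}$, and let $P_1,\dots,P_{N+1}$ be distributions such that $P_t$ has transfer exponent $\rho_t$ to $\mathcal{D}$; let $P_{(t)}$ denote the distribution with exponent $\rho_{(t)}$. Draw $i_1,\dots,i_{N+1}$ i.i.d. from $\mathrm{Unif}(\{1,\dots,m\})$ and set $Q_t=P_{(i_t)}$. Then with probability at least $0.97$ there exists a permutation $\pi$ of $[N+1]$ with $i_{\pi(t)}\le t$ for all $t\in[N+1]$; in particular, on this event $Q_{\pi(t)}$ has transfer exponent $\rho_{(t)}$ to $\mathcal{D}$ for every $t$, i.e. some permutation of $Q_1,\dots,Q_{N+1}$ admits the transfer exponents $\rho_{(1)},\dots,\rho_{(N+1)}$.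
   Context: A distribution $P$ has transfer exponent $\rho>0$ to $\mathcal{D}$ with respect to a concept class $\mathcal{H}$ (with constant $C_\rho\ge2$) if $\mathcal{E}_{\mathcal{D}}(h)\le C_\rho(\mathcal{E}_P(h))^{1/\rho}$ for all $h\in\mathcal{H}$, where $\mathcal{E}_P(h)=\mathrm{er}_P(h)-\inf_{h'\in\mathcal{H}}\mathrm{er}_P(h')$ and $\mathrm{er}_P(h)=P\{(x,y):h(x)\ne y\}$. *)

From HB Require Import structures.
From mathcomp Require Import all_boot all_order all_algebra all_fingroup.
From mathcomp Require Import all_classical all_reals all_analysis.
Set Implicit Arguments. Unset Strict Implicit. Unset Printing Implicit Defensive.
Import Order.TTheory GRing.Theory Num.Theory.
Local Open Scope classical_set_scope.
Local Open Scope ring_scope.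

Section Transfer.
Context {d : measure_display} {X : measurableType d} {R : realType}.

Definition er (P : probability (X * bool)%type R) (h : X -> bool) : R :=
  fine (P [set xy | h xy.1 != xy.2]).

Definition excess (H : set (X -> bool)) (P : probability (X * bool)%type R)
  (h : X -> bool) : R :=
  er P h - inf [set er P h' | h' in H].

Definition has_transfer_exponent (H : set (X -> bool)) (C : R)
  (P D : probability (X * bool)%type R) (rho : R) : Prop :=
  0 < rho /\ 2 <= C /\
  forall h, H h -> excess H D h <= C * powR (excess H P h) (rho^-1).
End Transfer.

From HB Require Import structures.
From mathcomp Require Import all_boot all_order all_algebra all_fingroup.
From mathcomp Require Import all_classical all_reals all_analysis.
From mathcomp Require Import zify ring lra.
Import Order.TTheory GRing.Theory Num.Theory.
Set Implicit Arguments. Unset Strict Implicit. Unset Printing Implicit Defensive.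

(* A draw [i] admits the permutation as soon as it satisfies Hall's condition
   [#{t | i t < a} >= a] for every [a < m]: listing the indices by increasing
   [i t] puts the [t]-th one at a value [<= t].  Hall's condition fails at
   [a = 1] with probability [(1 - 1/m)^(N+1) <= 2^-10], and at [a >= 2] with
   probability at most [2^(a-1) (1 - a/2m)^(N+1) <= 2^-(4a+1)]: give weight [1]
   to the values below [a] and [2] to the others, and compare the weight of a
   deficient draw with the total weight.  Summing over [a], the failure
   probability is below [1/64].  Since excess risks lie in [0, 1], a transfer
   exponent may be replaced by any larger one, so [i (pi t) <= t] yields the
   exponent [rho_(t)] for [Q_(pi t)]. *)

Definition count_below n m (i : 'I_n -> 'I_m) (a : nat) : nat :=
  #|[pred s | i s < a]|.

Section HallPerm.
Variables (n m : nat) (i : 'I_n -> 'I_m).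

Let key (s : 'I_n) := i s * n + s.
Let rank (s : 'I_n) := #|[pred u | key u < key s]|.

Lemma key_inj : injective key.
Proof.
move=> s s' eq_key; apply: val_inj.
have := congr1 (modn^~ n) eq_key; rewrite /= !modnMDl !modn_small //.
Qed.

Lemma rank_lt s : rank s < n.
Proof.
rewrite /rank -[X in _ < X]card_ord; apply: proper_card; apply/properP.
by split; [exact: subset_predT | exists s; rewrite //= inE ltnn].
Qed.

Lemma rank_mono s s' : key s < key s' -> rank s < rank s'.
Proof.
move=> lt_ss'; apply: proper_card; apply/properP; split.
  by apply/fintype.subsetP => u; rewrite !inE => /ltn_trans; apply.
by exists s; rewrite !inE ?ltnn.
Qed.

Definition rank_ord s : 'I_n := Ordinal (rank_lt s).

Lemma rank_ord_inj : injective rank_ord.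
Proof.
move=> s s' /(congr1 val) /= eq_rank.
case: (ltngtP (key s) (key s')) => [/rank_mono|/rank_mono|/key_inj //].
  by rewrite eq_rank ltnn.
by rewrite eq_rank ltnn.
Qed.

(* [pi t] is the index of rank [t] for the lexicographic order on [(i s, s)]. *)
Lemma hall_perm :
  (forall a : 'I_m, a <= count_below i a) ->
  exists pi : {perm 'I_n}, forall t, i (pi t) <= t.
Proof.
move=> hall_i; exists (perm rank_ord_inj)^-1%g => t; set s := _ t.
have rank_s : rank s = t.
  by have /(congr1 val) := permKV (perm rank_ord_inj) t; rewrite permE.
rewrite leqNgt; apply/negP => lt_t_is.
have lt_tm : t.+1 < m by apply: leq_trans (ltn_ord (i s)).
have below_sub : [pred u | i u < t.+1] \subset [pred u | key u < key s].
  apply/fintype.subsetP => u; rewrite !inE /key => lt_iu.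
  have : (i u).+1 * n <= i s * n by rewrite leq_mul2r; lia.
  by rewrite mulSn; have := ltn_ord u; lia.
have := hall_i (Ordinal lt_tm); rewrite /count_below /=.
move/leq_trans/(_ (subset_leq_card below_sub)).
by rewrite -/(rank s) rank_s ltnn.
Qed.
End HallPerm.

Section Counting.
Variables (n m : nat).
Implicit Types (i : {ffun 'I_n -> 'I_m}) (w : 'I_m -> nat).

Lemma sum_ffun_prod w :
  \sum_(i : {ffun 'I_n -> 'I_m}) \prod_(s : 'I_n) w (i s) = (\sum_v w v) ^ n.
Proof.
by rewrite -(bigA_distr_bigA (fun _ => w)) /= prod_nat_const card_ord.
Qed.

Lemma card_mul_le_weight (A : pred {ffun 'I_n -> 'I_m}) w L :
  (forall i, A i -> L <= \prod_s w (i s)) -> #|A| * L <= (\sum_v w v) ^ n.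
Proof.
move=> weightA; rewrite -sum_ffun_prod -sum_nat_const [X in _ <= X](bigID A) /=.
by apply: leq_trans (leq_addr _ _); apply: leq_sum => i /weightA.
Qed.

Lemma sum_step_weight a c e : a <= m ->
  \sum_(v : 'I_m) (if v < a then c else e) = c * a + e * (m - a).
Proof.
move=> le_am; rewrite -(big_mkord xpredT (fun v => if v < a then c else e)).
rewrite (@big_cat_nat _ _ _ a 0 m _ _ (leq0n a) le_am) /=.
rewrite (eq_big_nat _ _ (F2 := fun=> c)); last by move=> v /andP[_ ->].
rewrite [X in _ + X](eq_big_nat _ _ (F2 := fun=> e)); last first.
  by move=> v /andP[le_av _]; rewrite ltnNge le_av.
by rewrite !sum_nat_const_nat subn0 mulnC [e * _]mulnC.
Qed.

Lemma prod_step_weight a c e i :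
  \prod_(s : 'I_n) (if i s < a then c else e) =
  c ^ count_below i a * e ^ (n - count_below i a).
Proof.
rewrite (bigID (fun s => i s < a)) /=.
rewrite (eq_bigr (fun=> c)); last by move=> s ->.
rewrite [X in _ * X](eq_bigr (fun=> e)); last by move=> s /negbTE ->.
rewrite -(prod_nat_const [pred s | i s < a]) -/(count_below i a).
have -> : n - count_below i a = #|[predC [pred s | i s < a]]|.
  by rewrite -[X in X - _]card_ord -(cardC [pred s | i s < a]) addKn.
rewrite -(prod_nat_const [predC [pred s | i s < a]]).
by congr (_ * _); apply: eq_bigl => s; rewrite !inE.
Qed.

Definition hall_deficient a : pred {ffun 'I_n -> 'I_m} :=
  [pred i : {ffun 'I_n -> 'I_m} | count_below i a < a].

Definition hall : pred {ffun 'I_n -> 'I_m} :=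
  [pred i : {ffun 'I_n -> 'I_m} | [forall a : 'I_m, a <= count_below i a]].

Lemma card_not_hall : #|[predC hall]| <= \sum_(a < m) #|hall_deficient a|.
Proof.
have -> : \sum_(a < m) #|hall_deficient a| =
          \sum_i \sum_(a < m) (i \in hall_deficient a).
  rewrite exchange_big; apply: eq_bigr => a _.
  by rewrite -sum1_card big_mkcond; apply: eq_bigr => i _; case: (_ \in _).
rewrite -sum1_card [X in _ <= X](bigID [predC hall]) /=.
apply: leq_trans (leq_addr _ _); apply: leq_sum => i.
rewrite inE negb_forall => /existsP[a]; rewrite -ltnNge => def_a.
by rewrite (bigD1 a) //= inE def_a.
Qed.

Lemma card_deficient1 : 0 < m -> #|hall_deficient 1| <= (m - 1) ^ n.
Proof.
move=> m_gt0; rewrite -[X in X <= _]muln1.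
have := @card_mul_le_weight (hall_deficient 1)
  (fun v => if v < 1 then 0 else 1) 1.
rewrite sum_step_weight // mul0n add0n mul1n; apply=> i /= /ltnSE.
by rewrite leqn0 prod_step_weight => /eqP ->; rewrite subn0 exp1n.
Qed.

(* A deficient draw has at most [a] values of weight [1], hence weight at least
   [2 ^ (n - a)], while the total weight is [(a.+1 + 2 (m - a.+1)) ^ n]. *)
Lemma card_deficientS a : a < m ->
  #|hall_deficient a.+1| * 2 ^ (n - a) <= (2 * m - a.+1) ^ n.
Proof.
move=> lt_am.
have := @card_mul_le_weight (hall_deficient a.+1)
  (fun v => if v < a.+1 then 1 else 2) (2 ^ (n - a)).
rewrite sum_step_weight // mul1n.
rewrite (_ : a.+1 + 2 * (m - a.+1) = 2 * m - a.+1); last by lia.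
apply=> i /= /ltnSE le_count.
by rewrite prod_step_weight exp1n mul1n leq_pexp2l // leq_sub2l.
Qed.
End Counting.

Local Open Scope classical_set_scope.
Local Open Scope ring_scope.

Section Estimates.
Variable R : realFieldType.

Lemma bernoulli_le (x : R) k : -1 <= x -> 1 + k%:R * x <= (1 + x) ^+ k.
Proof.
move=> ge_x_N1; elim: k => [|k IH]; first by rewrite mul0r addr0 expr0.
have ge0_1x : 0 <= 1 + x by lra.
rewrite exprS; apply: le_trans (ler_wpM2l ge0_1x IH); rewrite -natr1.
have : 0 <= k%:R * x * x :> R by rewrite -mulrA mulr_ge0 // -expr2 sqr_ge0.
nra.
Qed.

(* [(1 - u) ^ M (1 + u) ^ M <= 1] with [(1 + u) ^ M >= 2] by Bernoulli. *)
Lemma one_subV_expr_le_half M : (0 < M)%N -> (1 - M%:R^-1) ^+ M <= 2^-1 :> R.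
Proof.
move=> M_gt0; have gt0_M : 0 < M%:R :> R by rewrite ltr0n.
set u := M%:R^-1; have u_gt0 : 0 < u by rewrite invr_gt0.
have u_le1 : u <= 1 by rewrite invf_le1 // ler1n.
have prod_le1 : (1 - u) ^+ M * (1 + u) ^+ M <= 1.
  by rewrite -exprMn; apply: exprn_ile1; nra.
have ge2 : 2 <= (1 + u) ^+ M.
  apply: le_trans (bernoulli_le M (_ : -1 <= u)); last by lra.
  by rewrite /u mulfV ?gt_eqF.
have ge0 : 0 <= (1 - u) ^+ M by apply: exprn_ge0; lra.
have := ler_wpM2l ge0 ge2; lra.
Qed.

Lemma one_subV_expr_le M n k : (0 < M)%N -> (k * M <= n)%N ->
  (1 - M%:R^-1) ^+ n <= (2^-1) ^+ k :> R.
Proof.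
move=> M_gt0 le_kMn; have gt0_M : 0 < M%:R :> R by rewrite ltr0n.
have ge0 : 0 <= 1 - M%:R^-1 :> R by rewrite subr_ge0 invf_le1 // ler1n.
have le1 : 1 - M%:R^-1 <= 1 :> R by rewrite lerBlDr lerDl invr_ge0 ltW.
apply: le_trans (_ : (1 - M%:R^-1) ^+ (M * k) <= _).
  by apply: ler_wiXn2l => //; rewrite mulnC.
rewrite exprM; apply: lerXn2r; rewrite ?nnegrE ?exprn_ge0 ?invr_ge0 //.
exact: one_subV_expr_le_half.
Qed.

(* Bernoulli gives [M - a <= M (1 - 1/M) ^ a]. *)
Lemma natrB_expr_le M a n k : (0 < M)%N -> (a <= M)%N -> (k * M <= n)%N ->
  (M - a)%:R ^+ n <= M%:R ^+ n * (2^-1) ^+ (k * a) :> R.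
Proof.
move=> M_gt0 le_aM le_kMn; have gt0_M : 0 < M%:R :> R by rewrite ltr0n.
have le_MBa : (M - a)%:R <= M%:R * (1 - M%:R^-1) ^+ a :> R.
  have ge_N1 : -1 <= - M%:R^-1 :> R by rewrite lerN2 invf_le1 // ler1n.
  apply: le_trans (ler_wpM2l (ltW gt0_M) (bernoulli_le a ge_N1)).
  by rewrite natrB // mulrDr mulr1 mulrN mulrN mulrCA mulfV ?gt_eqF // mulr1.
have ge0 : 0 <= 1 - M%:R^-1 :> R by rewrite subr_ge0 invf_le1 // ler1n.
apply: le_trans (lerXn2r _ _ _ le_MBa) _; rewrite ?nnegrE ?mulr_ge0 ?exprn_ge0 //.
rewrite exprMn -exprM ler_wpM2l ?exprn_ge0 ?ler0n //.
by apply: one_subV_expr_le; rewrite // mulnAC mulnC leq_mul2l le_kMn orbT.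
Qed.

Lemma sum_halfX_le2 K : \sum_(a < K) (2^-1 : R) ^+ a <= 2.
Proof.
have := subrX1 (2^-1 : R) K; have : 0 <= (2^-1 : R) ^+ K by rewrite exprn_ge0.
lra.
Qed.

Lemma halfX_le k l : (k <= l)%N -> (2^-1 : R) ^+ l <= (2^-1) ^+ k.
Proof. by apply: ler_wiXn2l; rewrite ?invr_ge0 ?invf_le1 ?ler1n. Qed.

Lemma card_deficient1_le n m : (0 < m)%N -> (10 * m <= n)%N ->
  #|@hall_deficient n m 1|%:R <= m%:R ^+ n * (2^-1) ^+ 10 :> R.
Proof.
move=> m_gt0 le_10mn; rewrite -[10%N]muln1.
apply: (le_trans (y := ((m - 1) ^ n)%:R)); first by rewrite ler_nat card_deficient1.
by rewrite natrX natrB_expr_le.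
Qed.

Lemma card_deficientSS_le n m a : (a.+2 < m)%N -> (10 * m <= n)%N ->
  #|@hall_deficient n m a.+2|%:R <= m%:R ^+ n * (2^-1) ^+ (4 * a + 9) :> R.
Proof.
move=> lt_am le_10mn; have le_an : (a.+1 <= n)%N by lia.
have pow2_gt0 : 0 < 2 ^+ (n - a.+1) :> R by rewrite exprn_gt0.
rewrite -(ler_pM2r pow2_gt0); apply: (le_trans (y := (2 * m - a.+2)%:R ^+ n)).
  by rewrite -!natrX -natrM ler_nat; apply: card_deficientS; lia.
apply: le_trans (_ : _ <= (2 * m)%:R ^+ n * (2^-1) ^+ (5 * a.+2)) _.
  by apply: natrB_expr_le; lia.
have -> : (2 * m)%:R ^+ n = m%:R ^+ n * 2 ^+ (n - a.+1) * 2 ^+ a.+1 :> R.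
  by rewrite natrM exprMn -mulrA -exprD subnK // mulrC.
rewrite (_ : 5 * a.+2 = a.+1 + (4 * a + 9))%N; last by lia.
have pow2_halfX : (2 : R) ^+ a.+1 * (2^-1) ^+ a.+1 = 1.
  by rewrite -exprMn mulfV ?pnatr_eq0 // expr1n.
rewrite exprD; set h := (2^-1 : R) ^+ (4 * a + 9).
have -> : m%:R ^+ n * 2 ^+ (n - a.+1) * 2 ^+ a.+1 * ((2^-1) ^+ a.+1 * h) =
          m%:R ^+ n * h * 2 ^+ (n - a.+1) * (2 ^+ a.+1 * (2^-1) ^+ a.+1) :> R.
  by ring.
by rewrite pow2_halfX mulr1.
Qed.

Lemma card_deficient_le n m (a : 'I_m) : (10 * m <= n)%N ->
  #|@hall_deficient n m a|%:R <= m%:R ^+ n * (2^-1) ^+ (a + 7) :> R.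
Proof.
have ge0_mn : 0 <= m%:R ^+ n :> R by rewrite exprn_ge0.
case: a => [[|[|a]] /= lt_am] le_10mn.
- rewrite (_ : #|_| = 0%N) ?mulr_ge0 ?exprn_ge0 ?invr_ge0 //.
  by apply: eq_card0 => i; rewrite inE.
- apply: le_trans (card_deficient1_le (ltnW lt_am) le_10mn) _.
  by rewrite ler_wpM2l // halfX_le.
- apply: le_trans (card_deficientSS_le lt_am le_10mn) _.
  by rewrite ler_wpM2l // halfX_le //; lia.
Qed.

Lemma card_hall_ge n m : (10 * m <= n)%N ->
  63 / 64 * m%:R ^+ n <= #|@hall n m|%:R :> R.
Proof.
move=> le_10mn.
have card_split : (#|@hall n m| + #|[predC @hall n m]| = m ^ n)%N.
  by rewrite cardC card_ffun !card_ord.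
have card_not : #|[predC @hall n m]|%:R <= m%:R ^+ n * (2^-1) ^+ 7 * 2 :> R.
  apply: le_trans (_ : (\sum_(a < m) #|@hall_deficient n m a|)%:R <= _).
    by rewrite ler_nat card_not_hall.
  rewrite natr_sum.
  apply: le_trans (ler_sum _ (fun a _ => card_deficient_le a le_10mn)) _.
  under eq_bigr do rewrite addnC exprD mulrA.
  by rewrite -mulr_sumr ler_wpM2l ?mulr_ge0 ?exprn_ge0 ?invr_ge0 ?sum_halfX_le2.
rewrite (_ : (2^-1 : R) ^+ 7 = 128^-1) in card_not; last by rewrite exprVn -natrX.
have := ler0n R #|@hall n m|; move: card_not; rewrite -natrX -card_split natrD; lra.
Qed.
End Estimates.

Section Transfer.
Context {d : measure_display} {X : measurableType d} {R : realType}.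
Implicit Types (P : probability (X * bool)%type R) (h : X -> bool).

Lemma measurable_misclassified h : measurable_fun setT h ->
  measurable [set xy : X * bool | h xy.1 != xy.2].
Proof.
move=> mh.
have -> : [set xy : X * bool | h xy.1 != xy.2] =
  (h @^-1` [set true] `*` [set false]) `|` (h @^-1` [set false] `*` [set true]).
  apply/seteqP; split => -[x b] /=.
    by case: (h x); case: b => //= _; [left | right].
  by case=> -[/= -> ->].
have := mh measurableT [set true] I; have := mh measurableT [set false] I.
by rewrite !setTI => mF mT; apply: measurableU; apply: measurableX.
Qed.

Lemma er_ge0 P h : 0 <= er P h.
Proof. exact: fine_ge0. Qed.

Lemma er_le1 P h : measurable_fun setT h -> er P h <= 1.
Proof.
move=> mh; have := probability_le1 P (measurable_misclassified mh).
by rewrite /er; case: (P _) (measure_ge0 P [set xy | h xy.1 != xy.2]).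
Qed.

Section Excess.
Variables (H : set (X -> bool)) (P : probability (X * bool)%type R).
Hypothesis measH : forall h, H h -> measurable_fun setT h.

Lemma excess_ge0 h : H h -> 0 <= excess H P h.
Proof.
move=> Hh; rewrite subr_ge0; apply: ge_inf; last by exists h.
by exists 0 => _ [h' _ <-]; apply: er_ge0.
Qed.

Lemma excess_le1 h : H h -> excess H P h <= 1.
Proof.
move=> Hh; have inf_ge0 : 0 <= inf [set er P h' | h' in H].
  by apply: lb_le_inf; [exists (er P h), h | move=> _ [h' _ <-]; apply: er_ge0].
by rewrite lerBlDr (le_trans (er_le1 P (measH Hh))) // lerDl.
Qed.

(* Excess risks lie in [0, 1], where [powR x] is antitone in the exponent. *)
Lemma has_transfer_exponent_le C D r1 r2 :
  has_transfer_exponent H C P D r1 -> 0 < r2 -> r1 <= r2 ->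
  has_transfer_exponent H C P D r2.
Proof.
move=> [r1_gt0 [C_ge2 transfer]] r2_gt0 le_r12; split=> //; split=> // h Hh.
apply: le_trans (transfer h Hh) _; rewrite ler_wpM2l ?(le_trans _ C_ge2) //.
have [<-|excess_gt0] := eqVneq 0 (excess H P h).
  by rewrite !powR0 // invr_eq0 gt_eqF.
apply: ger_powR; first by rewrite lt_neqAle excess_gt0 excess_ge0 // excess_le1.
by rewrite lef_pV2 ?posrE.
Qed.
End Excess.
End Transfer.

Theorem lemmaD2 (d : measure_display) (X : measurableType d) (R : realType)
  (H : set (X -> bool))
  (Hmeas : forall h, H h -> measurable_fun setT h)
  (C : R) (D : probability (X * bool)%type R)
  (N : nat) (HN : (10 <= N.+1)%N)
  (rho : 'I_N.+1 -> R) (P : 'I_N.+1 -> probability (X * bool)%type R)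
  (HP : forall t, has_transfer_exponent H C (P t) D (rho t))
  (sigma : {perm 'I_N.+1})
  (Hsort : forall s t : 'I_N.+1, (s <= t)%N -> rho (sigma s) <= rho (sigma t)) :
  let m := (N.+1 %/ 10)%N in
  (* index i : 'I_m (0-based) of the draw stands for i+1 in {1,...,m};
     Q_t = P_(i_t) = P (sigma i_t) *)
  let Q (i : {ffun 'I_N.+1 -> 'I_m}) (t : 'I_N.+1) := P (sigma (inord (i t))) in
  (97 / 100 : R) <=
    (#|[pred i : {ffun 'I_N.+1 -> 'I_m} |
        asbool (exists pi : {perm 'I_N.+1}, forall t : 'I_N.+1,
              (i (pi t) <= t)%N /\
              has_transfer_exponent H C (Q i (pi t)) D (rho (sigma t)))]|%:R
     / (m ^ N.+1)%:R).
Proof.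
rewrite /=; set m := (N.+1 %/ 10)%N; set good := [pred i | _].
have m_gt0 : (0 < m)%N by rewrite divn_gt0.
have le_10m : (10 * m <= N.+1)%N by rewrite mulnC leq_divM.
have hall_good : @hall N.+1 m \subset good.
  apply/fintype.subsetP => i /forallP /(@hall_perm _ _ i) [pi le_ipi].
  rewrite inE; exists pi => t; split=> //.
  have lt_iN : (i (pi t) < N.+1)%N by apply: leq_trans (ltn_ord _) (leq_div _ _).
  apply: (has_transfer_exponent_le Hmeas (HP _)); first by case: (HP (sigma t)).
  by apply: Hsort; rewrite inordK.
have := card_hall_ge R le_10m; have := subset_leq_card hall_good.
rewrite -(ler_nat R) ler_pdivlMr ?ltr0n ?expn_gt0 ?m_gt0 // natrX.
have : 0 <= m%:R ^+ N.+1 :> R by rewrite exprn_ge0.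
lra.
Qed.
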